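(* For any cubic graphs $G$ and $A$, a graph $G\circ A^-$ is Class $1$ if and only if $G$ and $A$ are Class $1$.
   Context: A cubic graph is Class $1$ if its chromatic index is $3$ and Class $2$ if its chromatic index is $4$. Let $G$ and $A$ be $3$-regular graphs, let $a$ be a vertex of $A$ and $A^-=A-a$. A graph $G\circ A^-$ is any graph obtained by replacing each vertex $v$ of $G$ by a copy $A^-_v$ of $A^-$ and, for each edge $uv$ of $G$, adding an edge joining a vertex of degree $2$ of $A^-_u$ to a vertex of degree $2$ of $A^-_v$, so that each degree-$2$ vertex of each copy is incident with exactly one added edge (the choices of $a$ and of these edges are arbitrary). *)

From mathcomp Require Import all_boot.
Set Implicit Arguments. Unset Strict Implicit. Unset Printing Implicit Defensive.

Definition simple_graph (T : finType) (e : rel T) : Prop :=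
  symmetric e /\ irreflexive e.

Definition cubic (T : finType) (e : rel T) : Prop :=
  simple_graph e /\ forall x : T, #|[set y | e x y]| = 3.

Definition proper_edge_coloring (T : finType) (e : rel T) (k : nat)
    (c : T -> T -> 'I_k) : Prop :=
  (forall x y, e x y -> c x y = c y x) /\
  (forall x y z, e x y -> e x z -> y != z -> c x y != c x z).

Definition edge_colorable (T : finType) (e : rel T) (k : nat) : Prop :=
  exists c : T -> T -> 'I_k, proper_edge_coloring e c.

Definition chromatic_index (T : finType) (e : rel T) (k : nat) : Prop :=
  edge_colorable e k /\ forall j, j < k -> ~ edge_colorable e j.

Definition class1 (T : finType) (e : rel T) : Prop := chromatic_index e 3.
Definition class2 (T : finType) (e : rel T) : Prop := chromatic_index e 4.

Definition minus_vert (W : finType) (a : W) := {w : W | w != a}.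

(* H is a graph G o A^- : vertex set V x (W \ {a});
   - inside each copy A^-_v the edges are those of A;
   - edges between different copies u, v join degree-2 vertices of A^-
     (i.e. neighbours of a in A) and only occur when uv is an edge of G;
   - for each edge uv of G exactly one edge joins A^-_u and A^-_v;
   - each degree-2 vertex of each copy is incident with exactly one added edge. *)
Definition is_comp (V W : finType) (G : rel V) (A : rel W) (a : W)
    (H : rel (V * minus_vert a)) : Prop :=
  symmetric H /\
  (forall v (x y : minus_vert a), H (v, x) (v, y) = A (val x) (val y)) /\
  (forall u v (x y : minus_vert a), u != v -> H (u, x) (v, y) ->
      [/\ G u v, A (val x) a & A (val y) a]) /\
  (forall u v, u != v -> G u v ->
      #|[set p : minus_vert a * minus_vert a | H (u, p.1) (v, p.2)]| = 1) /\
  (forall v (x : minus_vert a), A (val x) a ->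
      #|[set q : V * minus_vert a | (q.1 != v) && H (v, x) q]| = 1).
Arguments is_comp {V W} G A a H.

From mathcomp Require Import all_boot zify.
Set Implicit Arguments. Unset Strict Implicit. Unset Printing Implicit Defensive.

(* A cubic graph has even order, so each copy of A^- has odd order, and exactly three
   edges leave it.  By the Parity Lemma, in a 3-edge-colouring of a cubic graph each
   colour occurs an odd number of times on the cut of a set of odd order, so these
   three edges get three distinct colours.  Hence a colouring of G o A^- restricts to
   a colouring of A (an edge at a takes the colour of the corresponding edge leaving
   one copy) and induces a colouring of G (uv takes the colour of the edge between
   the copies of u and v).  Conversely, colourings of G and A combine after
   permuting the colours inside each copy so that the edges at a match the colours
   in G of the edges leaving the copy. *)

Section Involution.
Variables (T : finType) (f : T -> T).
Hypothesis fK : involutive f.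

Lemma even_card_involutive (S : {set T}) :
  {in S, forall x, f x \in S /\ f x != x} -> ~~ odd #|S|.
Proof.
have [n] := ubnP #|S|; elim: n S => // n IHn S ltSn fS.
have [-> | [x Sx]] := set_0Vmem S; first by rewrite cards0.
have [fSx fxx] := fS x Sx.
have cardS : #|S| = (#|S :\ x :\ f x|).+2.
  by rewrite (cardsD1 x S) Sx (cardsD1 (f x) (S :\ x)) !inE fxx fSx.
rewrite cardS /= negbK; apply: IHn => [|y]; first by rewrite cardS in ltSn; lia.
rewrite !inE => /and3P [yfx yx Sy]; have [fSy fyy] := fS y Sy.
rewrite fSy fyy andbT; split=> //; apply/andP; split.
  by apply: contra yx => /eqP fyfx; rewrite -[y]fK fyfx fK.
by apply: contra yfx => /eqP <-; rewrite fK.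
Qed.

Lemma odd_card_involutive (S : {set T}) :
  (forall x, f x != x) -> odd #|S| = odd #|[set x in S | f x \notin S]|.
Proof.
move=> fN; rewrite -(cardsID (f @^-1: S) S) oddD.
have /negPf -> : ~~ odd #|S :&: f @^-1: S|.
  by apply: even_card_involutive => x; rewrite !inE fK fN => /andP [-> ->].
suff -> : S :\: f @^-1: S = [set x in S | f x \notin S] by [].
by apply/setP => x; rewrite !inE andbC.
Qed.

End Involution.

Section UniqueWitness.
Variables (T : finType) (P : pred T).
Hypothesis P1 : #|[set x | P x]| = 1.

Lemma cards1_witness : exists x, P x.
Proof. by have /eqP/cards1P [x Px] := P1; exists x; rewrite -[P x]inE Px set11. Qed.

Lemma cards1_eq x y : P x -> P y -> x = y.
Proof.
have /eqP/cards1P [z Pz] := P1.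
by rewrite -[P x]inE -[P y]inE Pz !inE => /eqP -> /eqP ->.
Qed.

Lemma pick_cards1 x : P x -> [pick y | P y] = Some x.
Proof.
move=> Px; case: pickP => [y Py | P0]; first by rewrite (cards1_eq Py Px).
by rewrite P0 in Px.
Qed.

End UniqueWitness.

Definition cut (T : finType) (e : rel T) (S : {set T}) : {set T * T} :=
  [set p | [&& e p.1 p.2, p.1 \in S & p.2 \notin S]].

Lemma color_inj (T : finType) (e : rel T) k (c : T -> T -> 'I_k) x :
  proper_edge_coloring e c -> {in [set y | e x y] &, injective (c x)}.
Proof.
move=> pc y z; rewrite !inE => exy exz cxyz; apply/eqP; apply: contraT => yz.
by have := pc.2 x y z exy exz yz; rewrite cxyz eqxx.
Qed.

Section CubicGraph.
Variables (T : finType) (e : rel T).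
Hypothesis ec : cubic e.

Lemma cubic_sym : symmetric e. Proof. exact: ec.1.1. Qed.

Lemma cubic_irr x : e x x = false. Proof. exact: ec.1.2. Qed.

Lemma cubic_neq x y : e x y -> x != y.
Proof. by apply: contraTneq => ->; rewrite cubic_irr. Qed.

Lemma cubic_card_even : ~~ odd #|T|.
Proof.
have arcs : #|[set p : T * T | e p.1 p.2]| = 3 * #|T|.
  rewrite -sum1dep_card -(pair_big_dep predT e (fun _ _ => 1)) /=.
  rewrite mulnC -sum_nat_const; apply: eq_bigr => x _.
  by rewrite sum1dep_card ec.2.
have : ~~ odd #|[set p : T * T | e p.1 p.2]|.
  apply: (@even_card_involutive _ (fun p => (p.2, p.1))); first by case.
  move=> [x y]; rewrite !inE /= => exy; rewrite cubic_sym exy; split=> //.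
  by apply: contra (cubic_neq exy) => /eqP [->].
by rewrite arcs oddM.
Qed.

Lemma cubic_not_colorable (x : T) j : j < 3 -> ~ edge_colorable e j.
Proof.
move=> ltj3 [c pc]; have := max_card (c x @: [set y | e x y]).
by rewrite card_in_imset ?ec.2 ?card_ord; [lia | apply: color_inj].
Qed.

Lemma cubic_class1 (x : T) : edge_colorable e 3 -> class1 e.
Proof. by split=> // j; apply: cubic_not_colorable. Qed.

End CubicGraph.

Lemma class1_card_gt0 (T : finType) (e : rel T) : class1 e -> 0 < #|T|.
Proof.
case=> _ /(_ 0 isT) not0; rewrite lt0n; apply/eqP => /card0_eq T0; apply: not0.
have none (x : T) : False by have := T0 x.
by exists (fun x => False_rect _ (none x)); split=> x; case: (none x).
Qed.

Section ThreeEdgeColoring.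
Variables (T : finType) (e : rel T) (c : T -> T -> 'I_3).
Hypotheses (ec : cubic e) (pc : proper_edge_coloring e c).

Lemma color_surj x k : exists2 y, e x y & c x y = k.
Proof.
have : c x @: [set y | e x y] = [set: 'I_3].
  apply/eqP; rewrite eqEcard subsetT cardsT card_ord card_in_imset ?ec.2 //.
  exact: color_inj pc.
move/setP/(_ k); rewrite inE => /imsetP [y]; rewrite inE => exy ->.
by exists y.
Qed.

Definition mate k x := odflt x [pick y | e x y && (c x y == k)].

Lemma mateP k x : e x (mate k x) /\ c x (mate k x) = k.
Proof.
rewrite /mate; case: pickP => [y /andP [exy /eqP //] | none] /=.
by have [y exy cxy] := color_surj x k; have := none y; rewrite exy cxy eqxx.
Qed.

Lemma mate_eq k x y : e x y -> c x y = k -> mate k x = y.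
Proof.
have [exm cxm] := mateP k x => exy cxy.
by apply: (color_inj (x := x) pc); rewrite ?inE ?cxm ?cxy.
Qed.

Lemma mateK k : involutive (mate k).
Proof.
move=> x; have [exm cxm] := mateP k x.
by apply: mate_eq; rewrite 1?cubic_sym // -pc.1.
Qed.

Lemma mate_neq k x : mate k x != x.
Proof. by rewrite eq_sym; apply: (cubic_neq ec (mateP k x).1). Qed.

Lemma odd_card_cut_color (S : {set T}) k :
  odd #|[set p in cut e S | c p.1 p.2 == k]| = odd #|S|.
Proof.
rewrite (odd_card_involutive (mateK k) S (mate_neq k)).
have -> : [set p in cut e S | c p.1 p.2 == k] =
          (fun x => (x, mate k x)) @: [set x in S | mate k x \notin S].
  apply/setP => -[x y]; rewrite !inE /=; apply/idP/imsetP.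
    case/andP => /and3P [exy Sx Sy] /eqP cxy.
    by exists x; rewrite ?inE (mate_eq exy cxy) ?Sx.
  case=> z; rewrite inE => /andP [Sz Smz] [-> ->].
  by have [ezm czm] := mateP k z; rewrite ezm Sz Smz czm eqxx.
by rewrite card_imset // => x y [].
Qed.

Lemma cut3_color_inj (S : {set T}) :
  odd #|S| -> #|cut e S| = 3 -> {in cut e S &, injective (fun p => c p.1 p.2)}.
Proof.
move=> oddS cut3 p q pS qS /= cpq; apply/eqP; apply: contraT => pq.
pose cut_color j := [set r in cut e S | c r.1 r.2 == j].
have cut_colorS j : cut_color j \subset cut e S by apply/subsetP => r; rewrite inE => /andP [].
have odd_cut_color j : odd #|cut_color j| by rewrite odd_card_cut_color.
set k := c p.1 p.2 in cpq.
have all_k : cut_color k = cut e S.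
  apply/eqP; rewrite eqEcard cut_colorS cut3.
  have : #|[set p; q]| <= #|cut_color k|.
    apply: subset_leq_card; apply/subsetP => r /set2P [] ->;
    by rewrite /cut_color inE ?pS ?qS -?cpq eqxx.
  have := subset_leq_card (cut_colorS k); have := odd_cut_color k.
  by rewrite cards2 pq cut3; lia.
have [k' kk'] : exists k', k' != k.
  exists (if k == ord0 then ord_max else ord0).
  by case: (k =P ord0) => [-> | /eqP]; rewrite 1?eq_sym.
have /card_gt0P [r] := odd_gt0 (odd_cut_color k').
rewrite inE => /andP [rS /eqP crk']; move: rS; rewrite -all_k inE => /andP [_].
by rewrite crk' (negPf kk').
Qed.

End ThreeEdgeColoring.

Section Composition.
Variables (V W : finType) (G : rel V) (A : rel W) (a : W) (H : rel (V * minus_vert a)).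
Hypotheses (cubG : cubic G) (cubA : cubic A) (comp : is_comp G A a H).

Local Notation M := (minus_vert a).

Lemma comp_sym : symmetric H. Proof. exact: comp.1. Qed.

Lemma comp_inside v (x y : M) : H (v, x) (v, y) = A (val x) (val y).
Proof. exact: comp.2.1. Qed.

Lemma comp_across u v (x y : M) : u != v -> H (u, x) (v, y) ->
  [/\ G u v, A (val x) a & A (val y) a].
Proof. exact: comp.2.2.1. Qed.

Lemma comp_link_card u v : u != v -> G u v ->
  #|[set p : M * M | H (u, p.1) (v, p.2)]| = 1.
Proof. exact: comp.2.2.2.1. Qed.

Lemma comp_link_unique u v (x y x' y' : M) : u != v ->
  H (u, x) (v, y) -> H (u, x') (v, y') -> x = x' /\ y = y'.
Proof.
move=> uv Hxy Hxy'; have [Guv _ _] := comp_across uv Hxy.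
by case: (cards1_eq (comp_link_card uv Guv) (x := (x, y)) (y := (x', y')) Hxy Hxy').
Qed.

(* The ports are the vertices of degree 2 of A^-; a port of a copy has exactly one
   neighbour, its partner, in another copy. *)
Definition port : pred M := fun x => A (val x) a.

Definition partner (q : V * M) : V * M :=
  odflt q [pick q' | (q'.1 != q.1) && H q q'].

Lemma partner_eq v (x : M) q : q.1 != v -> H (v, x) q -> partner (v, x) = q.
Proof.
case: q => u y /= uv Hxy; rewrite eq_sym in uv.
have [_ portx _] := comp_across uv Hxy.
by rewrite /partner (pick_cards1 (comp.2.2.2.2 v x portx) (x := (u, y))) //= eq_sym uv.
Qed.

Lemma partnerP v (x : M) : port x -> (partner (v, x)).1 != v /\ H (v, x) (partner (v, x)).
Proof.
move=> portx; have [q /andP [qv Hq]] := cards1_witness (comp.2.2.2.2 v x portx).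
by rewrite (partner_eq qv Hq).
Qed.

Lemma cubic_comp : cubic H.
Proof.
split; first by split; [exact: comp_sym | case=> v x; rewrite comp_inside cubic_irr].
case=> v x; pose phi y := if y == a then partner (v, x) else (v, insubd x y).
have phi_inj : {in [set y | A (val x) y] &, injective phi}.
  move=> y z; rewrite !inE /phi.
  case: eqP => [-> | /eqP ya]; case: eqP => [-> | /eqP za] // Axy Axz.
  - by move=> pv; have [] := partnerP v Axy; rewrite pv eqxx.
  - by move=> vp; have [] := partnerP v Axz; rewrite -vp eqxx.
  - by case=> /(congr1 val); rewrite !insubdK.
rewrite -(cubA.2 (val x)) -(card_in_imset phi_inj); congr #|pred_of_set _|.
apply/setP => -[u y]; rewrite inE; apply/idP/imsetP => [|[z]].
  have [-> | uv] := eqVneq u v => Hxy.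
    exists (val y); first by rewrite inE -(comp_inside v).
    by rewrite /phi (negPf (valP y)) valKd.
  have vu : v != u by rewrite eq_sym.
  have [_ portx _] := comp_across vu Hxy.
  by exists a; rewrite ?inE // /phi eqxx (partner_eq (q := (u, y))).
rewrite inE /phi; case: eqP => [-> Axa -> | /eqP za Axz ->]; first by have [] := partnerP v Axa.
by rewrite comp_inside insubdK.
Qed.

Lemma card_port : #|port| = 3.
Proof.
rewrite -(cubA.2 a) -(card_imset _ val_inj); congr #|pred_of_set _|.
apply/setP => y; rewrite inE; apply/imsetP/idP => [[x portx ->] | Aay].
  by rewrite cubic_sym.
have ya : y != a by rewrite eq_sym (cubic_neq cubA Aay).
by exists (exist _ y ya); rewrite // unfold_in /port /= cubic_sym.
Qed.

Definition copy v : {set V * M} := [set q | q.1 == v].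

Lemma odd_card_copy v : odd #|copy v|.
Proof.
have -> : copy v = (pair v) @: [set: M].
  apply/setP => -[u x]; rewrite !inE /=.
  by apply/eqP/imsetP => [-> | [y _ [-> _]]] //; exists x; rewrite ?in_setT.
have pair_inj : injective (pair v : M -> V * M) by move=> x y [].
rewrite (card_imset _ pair_inj) cardsT card_sig cardC1.
have := cubic_card_even cubA; have : 0 < #|W| by apply/card_gt0P; exists a.
by case: #|W| => //= n _; rewrite negbK.
Qed.

Lemma cut_copy v : cut H (copy v) = [set ((v, x), partner (v, x)) | x in port].
Proof.
apply/setP => -[[u x] q]; rewrite !inE /=; apply/idP/imsetP.
  case: q => w y /and3P [Hxy /eqP uv /= wv]; subst u.
  have vw : v != w by rewrite eq_sym.
  have [_ portx _] := comp_across vw Hxy.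
  by exists x; rewrite // (partner_eq (q := (w, y))).
by case=> z portz [-> -> ->]; have [zv Hz] := partnerP v portz; rewrite Hz eqxx zv.
Qed.

Lemma card_cut_copy v : #|cut H (copy v)| = 3.
Proof. by rewrite cut_copy card_imset ?card_port // => x y []. Qed.

Lemma port_color_inj (cH : V * M -> V * M -> 'I_3) v : proper_edge_coloring H cH ->
  {in port &, injective (fun x => cH (v, x) (partner (v, x)))}.
Proof.
move=> pH x y portx porty /= cxy.
have cut_port z : port z -> ((v, z), partner (v, z)) \in cut H (copy v).
  by move=> portz; rewrite cut_copy; apply: imset_f.
have := cut3_color_inj cubic_comp pH (odd_card_copy v) (card_cut_copy v).
by move=> /(_ _ _ (cut_port x portx) (cut_port y porty) cxy) [].
Qed.

Lemma comp_class1_A : class1 H -> class1 A.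
Proof.
move=> H1; have /card_gt0P [[v0 x0] _] := class1_card_gt0 H1.
case: H1 => -[cH pH] _; apply: (cubic_class1 cubA a).
pose lift y := (v0, insubd x0 y).
have val_lift y : y != a -> val (lift y).2 = y by move=> ya; rewrite insubdK.
have lift_inj y z : y != a -> z != a -> lift y = lift z -> y = z.
  by move=> ya za [] /(congr1 val); rewrite !insubdK.
have lift_inside y z : y != a -> z != a -> A y z -> H (lift y) (lift z).
  by move=> ya za Ayz; rewrite comp_inside !val_lift.
have port_lift y : y != a -> A y a -> (lift y).2 \in port.
  by move=> ya Aya; rewrite unfold_in /port val_lift.
pose port_color y := cH (lift y) (partner (lift y)).
pose cA x y := if x == a then port_color y
               else if y == a then port_color x else cH (lift x) (lift y).
exists cA; split=> [x y Axy | x y z + + yz]; rewrite /cA.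
  case: (eqVneq x a) => [-> | xa]; case: (eqVneq y a) => [ya | ya] //; first by rewrite ya.
  by apply: pH.1; apply: lift_inside.
case: (eqVneq x a) => [-> | xa] Axy Axz.
  have [ya za] : y != a /\ z != a.
    by rewrite !(eq_sym _ a) (cubic_neq cubA Axy) (cubic_neq cubA Axz).
  apply: contra yz => /eqP cyz; apply/eqP/lift_inj => //.
  by rewrite /lift (port_color_inj pH _ _ cyz) // port_lift // cubic_sym.
have partner_lift : A x a -> (partner (lift x)).1 != v0 /\ H (lift x) (partner (lift x)).
  by move=> Axa; apply: partnerP; apply: port_lift.
case: (eqVneq y a) Axy yz => [-> | ya] Axy yz; case: (eqVneq z a) Axz yz => [-> | za] Axz yz.
- by move: yz.
- have [out_v0 H_out] := partner_lift Axy.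
  by apply: pH.2 => //; [apply: lift_inside | apply: contra out_v0 => /eqP ->].
- have [out_v0 H_out] := partner_lift Axz.
  by apply: pH.2 => //; [apply: lift_inside | apply: contra out_v0 => /eqP <-].
- apply: pH.2; rewrite ?lift_inside //.
  by apply: contra yz => /eqP /lift_inj ->.
Qed.

Lemma comp_class1_G : class1 H -> class1 G.
Proof.
move=> H1; have /card_gt0P [[v0 _] _] := class1_card_gt0 H1.
case: H1 => -[cH pH] _; apply: (cubic_class1 cubG v0).
pose cG u v := if [pick p : M * M | H (u, p.1) (v, p.2)] is Some p
               then cH (u, p.1) (v, p.2) else ord0.
have cGE u v x y : u != v -> H (u, x) (v, y) -> cG u v = cH (u, x) (v, y).
  move=> uv Hxy; have [Guv _ _] := comp_across uv Hxy.
  by rewrite /cG (pick_cards1 (comp_link_card uv Guv) (x := (x, y))).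
have cross_edge u v : G u v ->
    exists x y, [/\ u != v, H (u, x) (v, y) & partner (u, x) = (v, y)].
  move=> Guv; have uv := cubic_neq cubG Guv.
  have [[x y] Hxy] := cards1_witness (comp_link_card uv Guv).
  by exists x, y; rewrite (partner_eq (q := (v, y))) // eq_sym.
exists cG; split=> [u v | u v w] /cross_edge [x [y [uv Hxy Px]]].
  by rewrite (cGE _ _ _ _ uv Hxy) (cGE v u y x) 1?eq_sym 1?comp_sym //; apply: pH.1.
move=> /cross_edge [x' [y' [uw Hxy' Px']]] vw.
rewrite (cGE _ _ _ _ uv Hxy) (cGE _ _ _ _ uw Hxy') -Px -Px'.
have [_ portx _] := comp_across uv Hxy; have [_ portx' _] := comp_across uw Hxy'.
apply: contra vw => /eqP /(port_color_inj pH portx portx') xx'.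
by move: Px; rewrite xx' Px' => -[->].
Qed.

Definition link u (x : M) : V := (partner (u, x)).1.

Lemma link_adj u x : port x -> G u (link u x).
Proof.
move/(partnerP u); rewrite /link; case: partner => w y /= [wu Hxy].
by rewrite eq_sym in wu; case: (comp_across wu Hxy).
Qed.

Lemma link_inj u : {in port &, injective (link u)}.
Proof.
move=> x y /(partnerP u) + /(partnerP u); rewrite /link.
case: (partner (u, x)) => w x'; case: (partner (u, y)) => w' y' /= [wu Hx] [_ Hy] ww'.
by subst w'; rewrite eq_sym in wu; case: (comp_link_unique wu Hx Hy).
Qed.

Section Recoloring.
Variables (cG : V -> V -> 'I_3) (cA : W -> W -> 'I_3).
Hypotheses (pG : proper_edge_coloring G cG) (pA : proper_edge_coloring A cA).

Definition port_perm u k : 'I_3 :=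
  if [pick x | port x && (cA (val x) a == k)] is Some x then cG u (link u x) else k.

Lemma port_permE u x : port x -> port_perm u (cA (val x) a) = cG u (link u x).
Proof.
move=> portx; rewrite /port_perm; case: pickP => [y /andP [porty /eqP cyx] | none].
  congr (cG u (link u _)); apply: val_inj; apply: (color_inj pA (x := a)).
  1,2: by rewrite inE cubic_sym.
  by rewrite !(pA.1 a) // cubic_sym.
by have := none x; rewrite portx eqxx.
Qed.

Lemma port_of_color k : exists2 x, port x & cA (val x) a = k.
Proof.
have [y Aay cay] := color_surj cubA pA a k.
have ya : y != a by rewrite eq_sym (cubic_neq cubA Aay).
exists (exist _ y ya); first by rewrite /port /= cubic_sym.
by rewrite /= pA.1 // cubic_sym.
Qed.

Lemma port_perm_inj u : injective (port_perm u).
Proof.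
move=> k k'; have [x portx <-] := port_of_color k; have [x' portx' <-] := port_of_color k'.
rewrite !port_permE // => /(color_inj pG); rewrite !inE !link_adj // => /(_ isT isT).
by move/(link_inj portx portx') ->.
Qed.

Definition comp_color (p q : V * M) : 'I_3 :=
  if p.1 == q.1 then port_perm p.1 (cA (val p.2) (val q.2)) else cG p.1 q.1.

Lemma comp_color_proper : proper_edge_coloring H comp_color.
Proof.
rewrite /comp_color; split=> [[u x] [w y] | [u x] [w y] [w' y']] /=.
  case: (eqVneq u w) => [<- | uw] Hxy; first by rewrite pA.1 // -(comp_inside u).
  by have [Guw _ _] := comp_across uw Hxy; apply: pG.1.
have link_across v z : u != v -> H (u, x) (v, z) -> port x /\ v = link u x.
  move=> uv Hxz; have [_ portx _] := comp_across uv Hxz.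
  by rewrite /link (partner_eq (q := (v, z))) // eq_sym.
case: (eqVneq u w) => [<- | uw]; case: (eqVneq u w') => [<- | uw'] Hxy Hxy' yy'.
- rewrite (inj_eq (@port_perm_inj u)); apply: pA.2; rewrite -?(comp_inside u) //.
  by apply: contra yy' => /eqP /val_inj ->.
- have [portx ->] := link_across _ _ uw' Hxy'.
  rewrite -port_permE // (inj_eq (@port_perm_inj u)).
  by apply: pA.2; rewrite -?(comp_inside u) // (valP y).
- have [portx ->] := link_across _ _ uw Hxy.
  rewrite -port_permE // (inj_eq (@port_perm_inj u)).
  by apply: pA.2; rewrite -?(comp_inside u) // eq_sym (valP y').
- have wu : w != u by rewrite eq_sym.
  have w'u : w' != u by rewrite eq_sym.
  move: yy'; rewrite -(partner_eq (q := (w, y)) wu Hxy).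
  by rewrite -(partner_eq (q := (w', y')) w'u Hxy') eqxx.
Qed.

End Recoloring.

Lemma class1_comp : class1 G -> class1 A -> class1 H.
Proof.
move=> G1 [[cA pA] _]; have /card_gt0P [v0 _] := class1_card_gt0 G1.
have [[cG pG] _] := G1; have [x0 _ _] := port_of_color pA ord0.
apply: (cubic_class1 cubic_comp (v0, x0)).
by exists (comp_color cG cA); apply: comp_color_proper.
Qed.

End Composition.

Theorem proposition5p21 (V W : finType) (G : rel V) (A : rel W) (a : W)
    (H : rel (V * minus_vert a)) :
  cubic G -> cubic A -> is_comp G A a H ->
  (class1 H <-> class1 G /\ class1 A).
Proof.
move=> cubG cubA comp; split=> [H1 | [G1 A1]].
  by split; [apply: (comp_class1_G cubG cubA comp) | apply: (comp_class1_A cubA comp)].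
exact: (class1_comp cubA comp).
Qed.
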